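(* For every integer $i\ge1$, with $N=4^i+1$, there are exactly $2^{i-1}$ pairs $(A,B)$ of antipalindromic numbers with $N=A/B$.
   Context: A positive integer $n$ is antipalindromic if its binary representation $w=w_1\cdots w_L$ (most significant digit first, no leading zeros) has even length $L$ and satisfies $w_i+w_{L+1-i}=1$ for all $i$. *)

From mathcomp Require Import all_boot.
Set Implicit Arguments. Unset Strict Implicit. Unset Printing Implicit Defensive.

Definition binlen (n : nat) : nat := (trunc_log 2 n).+1.

Definition bit (n j : nat) : nat := odd (n %/ 2 ^ j).

(* n is antipalindromic: binary word w_1...w_L (MSB first) has even length L
   and w_i + w_{L+1-i} = 1 for all i.  Indexing from the LSB with
   j = L - i gives the same family of conditions. *)
Definition antipalindromic (n : nat) : bool :=
  [&& 0 < n, ~~ odd (binlen n) &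
      [forall j : 'I_(binlen n), bit n j + bit n (binlen n - 1 - j) == 1]].

(* Write k = 2i, so that A = (4^i + 1) B is B * 2^k + B.  For antipalindromic B
   of binary length L, A is antipalindromic exactly when L = k.  If L = k, the
   word of A is the word of B written twice.  If L < k, bits L and k - 1 of A are
   mirror positions inside the zero gap between the two copies of B.  If L > k,
   parity forces A to have length L + k; the symmetry of A and B then makes the
   top k bits of A agree with those of B, so the overlapping sum carries nothing
   into bit L, which the leading bits of B contradict.  The admissible B are a
   leading 1, a trailing 0 and an antipalindromic word of length 2i - 2 in
   between, hence 2^(i-1) of them. *)

From mathcomp Require Import all_boot zify.
Set Implicit Arguments. Unset Strict Implicit. Unset Printing Implicit Defensive.

Lemma bit_small n j : n < 2 ^ j -> bit n j = 0.
Proof. by move=> n_lt; rewrite /bit divn_small. Qed.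

Lemma bit_divn n m j : bit (n %/ 2 ^ m) j = bit n (m + j).
Proof. by rewrite /bit -divnMA -expnD. Qed.

Lemma bit_mulD_low x y k j : j < k -> bit (x * 2 ^ k + y) j = bit y j.
Proof.
move=> lt_jk; rewrite /bit -(subnK (ltnW lt_jk)) expnD mulnA divnMDl ?expn_gt0 //.
by rewrite oddD oddM oddX subn_eq0 leqNgt lt_jk andbF.
Qed.

Lemma bit_mulD_high x y k j : y < 2 ^ k -> k <= j -> bit (x * 2 ^ k + y) j = bit x (j - k).
Proof.
move=> y_lt le_kj; rewrite -{1}(subnKC le_kj) -bit_divn divnMDl ?expn_gt0 //.
by rewrite (divn_small y_lt) addn0.
Qed.

Lemma bit_modn n m j : j < m -> bit (n %% 2 ^ m) j = bit n j.
Proof. by move=> lt_jm; rewrite [in RHS](divn_eq n (2 ^ m)) bit_mulD_low. Qed.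

Lemma bit_msb n j : 2 ^ j <= n < 2 ^ j.+1 -> bit n j = 1.
Proof.
move=> /andP[lo hi]; rewrite /bit (_ : n %/ 2 ^ j = 1) //.
apply/eqP; rewrite eqn_leq -ltnS ltn_divLR ?expn_gt0 // -expnS hi.
by rewrite leq_divRL ?expn_gt0 // mul1n.
Qed.

Lemma bit_inj k x y : x < 2 ^ k -> y < 2 ^ k ->
  (forall j, j < k -> bit x j = bit y j) -> x = y.
Proof.
elim: k x y => [|k IHk] x y x_lt y_lt eq_bits.
  by move: x_lt y_lt; rewrite !ltnS !leqn0 => /eqP-> /eqP->.
rewrite (divn_eq x 2) (divn_eq y 2) !modn2.
have := eq_bits 0 isT; rewrite /bit !divn1 => ->; congr (_ * _ + _).
apply: IHk; rewrite ?ltn_divLR -?expnSr // => j lt_jk.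
by rewrite -(expn1 2) !bit_divn; apply: eq_bits.
Qed.

Lemma binlen_bounds n : 0 < n -> 2 ^ (binlen n).-1 <= n < 2 ^ binlen n.
Proof. by move=> n_gt0; rewrite trunc_logP ?trunc_log_ltn. Qed.

Lemma binlen_eq n L : 2 ^ L.-1 <= n < 2 ^ L -> binlen n = L.
Proof.
case: L => [/andP[lo hi]|L lohi]; first by have := leq_ltn_trans lo hi.
by rewrite /binlen (trunc_log_eq _ lohi).
Qed.

Lemma binlen_gtn n m : 2 ^ m <= n -> m < binlen n.
Proof. exact: trunc_log_max. Qed.

Lemma binlen_leq n m : 0 < n -> n < 2 ^ m -> binlen n <= m.
Proof.
move=> n_gt0 n_lt; rewrite -(ltn_exp2l _ _ (isT : 1 < 2)).
by apply: leq_ltn_trans n_lt; rewrite trunc_logP.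
Qed.

Lemma binlen_mulD x y k : 0 < x -> y < 2 ^ k -> binlen (x * 2 ^ k + y) = binlen x + k.
Proof.
move=> x_gt0 y_lt; have /andP[] := binlen_bounds x_gt0; rewrite /binlen /= => lo hi.
apply: binlen_eq; rewrite addSn /= -[(_ + k).+1]addSn !expnD; apply/andP; split.
  by rewrite (leq_trans _ (leq_addr _ _)) // leq_mul2r lo orbT.
have lt_xS : x * 2 ^ k + y < x.+1 * 2 ^ k by rewrite mulSnr ltn_add2l.
by apply: leq_trans lt_xS _; rewrite leq_mul2r hi orbT.
Qed.

Definition antisym_bits w u := forall j, j < w -> bit u j + bit u (w - 1 - j) = 1.

Lemma antipalindromicP n :
  antipalindromic n <-> [/\ 0 < n, ~~ odd (binlen n) & antisym_bits (binlen n) n].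
Proof.
split=> [/and3P[n_gt0 even_n /forallP anti]|[n_gt0 even_n anti]].
  by split=> // j lt_j; apply/eqP/(anti (Ordinal lt_j)).
by apply/and3P; split=> //; apply/forallP=> j; apply/eqP/anti.
Qed.

Lemma bit_binlen n : 0 < n -> bit n (binlen n).-1 = 1.
Proof. by move=> n_gt0; rewrite bit_msb // prednK // binlen_bounds. Qed.

Lemma antipalindromic_even n : antipalindromic n -> ~~ odd n.
Proof.
move=> /antipalindromicP[n_gt0 _ anti].
have := anti 0 isT; rewrite subn0 subn1 bit_binlen // /bit divn1.
by case: odd.
Qed.

Lemma antipalindromic_repeat_binlen B :
  antipalindromic B -> antipalindromic (B * 2 ^ binlen B + B).
Proof.
move=> /antipalindromicP[B_gt0 _ anti]; set L := binlen B in anti *.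
have B_lt : B < 2 ^ L by case/andP: (binlen_bounds B_gt0).
apply/antipalindromicP; rewrite binlen_mulD // addnn odd_double addn_gt0 B_gt0 orbT.
split=> // j; rewrite -addnn => lt_j; case: (ltnP j L) => [lt_jL|le_Lj].
  rewrite bit_mulD_low // bit_mulD_high //; last by lia.
  by rewrite (_ : _ - L = L - 1 - j) ?anti //; lia.
rewrite bit_mulD_high // bit_mulD_low; last by lia.
by rewrite -(_ : L - 1 - (j - L) = L + L - 1 - j) ?anti //; lia.
Qed.

Lemma not_antipalindromic_repeat_gap B k :
  0 < B -> binlen B < k -> ~~ antipalindromic (B * 2 ^ k + B).
Proof.
move=> B_gt0 lt_Lk; set L := binlen B in lt_Lk.
have B_lt : B < 2 ^ L by case/andP: (binlen_bounds B_gt0).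
have B_lt_pred : B < 2 ^ k.-1 by apply: leq_trans B_lt _; rewrite leq_exp2l //; lia.
have B_ltk : B < 2 ^ k by apply: leq_trans B_lt _; rewrite leq_exp2l //; lia.
apply/negP => /antipalindromicP[_ _ /(_ L)]; rewrite binlen_mulD //.
rewrite (_ : L + k - 1 - L = k.-1); last by lia.
by rewrite !bit_mulD_low ?bit_small //; lia.
Qed.

Lemma binlen_repeat B k : 0 < B ->
  odd (binlen (B * 2 ^ k + B)) = odd (binlen B + k) ->
  binlen (B * 2 ^ k + B) = binlen B + k.
Proof.
move=> B_gt0; have /andP[lo hi] := binlen_bounds B_gt0.
set L := binlen B in lo hi *; set A := B * 2 ^ k + B.
have lo_A : L.-1 + k < binlen A.
  apply: binlen_gtn; apply: leq_trans (leq_addr B _).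
  by rewrite expnD leq_mul2r lo orbT.
have hi_A : binlen A <= (L + k).+1.
  apply: binlen_leq; first by rewrite addn_gt0 B_gt0 orbT.
  have := expn_gt0 2 k; rewrite /A expnS expnD; nia.
have [//|->] : binlen A = L + k \/ binlen A = (L + k).+1 by lia.
by rewrite /= => /eqP; case: odd.
Qed.

Lemma antipalindromic_repeat_modn B k :
  antipalindromic B -> antipalindromic (B * 2 ^ k + B) ->
  binlen (B * 2 ^ k + B) = binlen B + k -> k <= binlen B ->
  (B * 2 ^ k + B) %% 2 ^ binlen B = B %% 2 ^ (binlen B - k) * 2 ^ k + B.
Proof.
move=> /antipalindromicP[B_gt0 _ symB] /antipalindromicP[_ _ symA] lenA le_kL.
move: symA; rewrite lenA; set L := binlen B in symB le_kL *; set A := _ + B => symA.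
have /andP[_ B_lt] := binlen_bounds B_gt0.
have A_gt0 : 0 < A by rewrite addn_gt0 B_gt0 orbT.
have /andP[_] := binlen_bounds A_gt0; rewrite lenA => A_lt.
have highA : A %/ 2 ^ L = B %/ 2 ^ (L - k).
  apply: (@bit_inj k) => [||j lt_jk].
  - by rewrite ltn_divLR ?expn_gt0 // -expnD addnC.
  - by rewrite ltn_divLR ?expn_gt0 // -expnD subnKC.
  rewrite !bit_divn; have := symA (k - 1 - j); have := symB (k - 1 - j).
  rewrite /A bit_mulD_low; last by lia.
  rewrite (_ : L + k - 1 - (k - 1 - j) = L + j); last by lia.
  rewrite (_ : L - 1 - (k - 1 - j) = L - k + j); last by lia.
  move=> symB_j symA_j; move: (symB_j ltac:(lia)) (symA_j ltac:(lia)); lia.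
apply/(@addnI (A %/ 2 ^ L * 2 ^ L)); rewrite -divn_eq highA addnA /A.
by rewrite {1}(divn_eq B (2 ^ (L - k))) mulnDl -mulnA -expnD subnK.
Qed.

Lemma not_antipalindromic_repeat_overlap B k : antipalindromic B ->
  k < binlen B -> ~~ odd k -> ~~ antipalindromic (B * 2 ^ k + B).
Proof.
move=> antiB lt_kL even_k; apply/negP => antiA.
(* No carry into bit L means T * 2^k + B < 2^L, with T the low L - k bits of B;
   bit L - 1 of A then forces bit k of B to 0, i.e. the top bit of T to 1. *)
have evenB := antipalindromic_even antiB.
have /antipalindromicP[B_gt0 evenL symB] := antiB.
have /antipalindromicP[_ evenM symA] := antiA.
have lenA : binlen (B * 2 ^ k + B) = binlen B + k.
  by apply: binlen_repeat; rewrite // oddD (negbTE evenL) (negbTE evenM) (negbTE even_k).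
have modA := antipalindromic_repeat_modn antiB antiA lenA (ltnW lt_kL).
move: symA modA; rewrite lenA; set L := binlen B in lt_kL evenL symB *.
set A := _ + B => symA modA; set T := B %% 2 ^ (L - k).
have L_gt0 : 0 < L by apply: leq_ltn_trans lt_kL.
have split_pred : L - k - 1 + k = L.-1 by lia.
have /andP[loB _] := binlen_bounds B_gt0.
have modA_lt : T * 2 ^ k + B < 2 ^ L by rewrite -modA ltn_mod expn_gt0.
have bitA_top : bit A L.-1 = 1.
  rewrite -(@bit_modn A L) ?ltn_predL // modA bit_msb // prednK // modA_lt andbT.
  exact: leq_trans loB (leq_addl _ _).
have bitA_k : bit A k = bit B k.
  by rewrite /bit /A divnMDl ?expn_gt0 // oddD (negbTE evenB).
have bitB_k : bit B k = 0.
  have := symA k (ltn_addr _ lt_kL).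
  by rewrite subnAC addnK subn1 bitA_top bitA_k addn1 => /eqP; rewrite eqSS => /eqP.
have bitT_top : bit T (L - k - 1) = 1.
  have := symB k lt_kL; rewrite bitB_k add0n subnAC => bitB_mirror.
  by rewrite /T bit_modn // subn1 ltn_predL subn_gt0.
have T_ge : 2 ^ (L - k - 1) <= T.
  by rewrite leqNgt; apply/negP => /bit_small; rewrite bitT_top.
have T_hi : 2 ^ L.-1 <= T * 2 ^ k.
  by rewrite -split_pred expnD leq_mul2r T_ge orbT.
have two_halves : 2 ^ L = 2 ^ L.-1 + 2 ^ L.-1.
  by rewrite addnn -mul2n -expnS prednK.
by have := leq_ltn_trans (leq_add T_hi loB) modA_lt; rewrite two_halves ltnn.
Qed.

Lemma antipalindromic_repeatE B k : antipalindromic B -> ~~ odd k ->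
  antipalindromic (B * 2 ^ k + B) <-> binlen B = k.
Proof.
move=> antiB even_k; split=> [antiA|<-]; last exact: antipalindromic_repeat_binlen.
have B_gt0 : 0 < B by case/antipalindromicP: antiB.
case: (ltngtP (binlen B) k) => // [lt_Lk|lt_kL].
  by move/negP: (not_antipalindromic_repeat_gap B_gt0 lt_Lk).
by move/negP: (not_antipalindromic_repeat_overlap antiB lt_kL even_k).
Qed.

Lemma odd_leq1 b : b <= 1 -> odd b = b :> nat.
Proof. by case: b => [|[]]. Qed.

Lemma bit_double_add v c j : c <= 1 ->
  bit (v * 2 + c) j = if j is j'.+1 then bit v j' else c.
Proof.
move=> c_le1; case: j => [|j].
  by rewrite /bit divn1 oddD oddM andbF odd_leq1.
by rewrite -[j.+1]add1n -bit_divn expn1 divnMDl // divn_small ?addn0.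
Qed.

Definition antipal_word w u := u < 2 ^ w /\ antisym_bits w u.

Definition wrap_bits w a v c := a * 2 ^ w.+1 + (v * 2 + c).

Lemma antipal_word_wrap w a v c : a <= 1 -> c <= 1 -> v < 2 ^ w ->
  antipal_word w.+2 (wrap_bits w a v c) <-> a + c = 1 /\ antipal_word w v.
Proof.
move=> a_le1 c_le1 v_lt; set u := wrap_bits w a v c.
have vc_lt : v * 2 + c < 2 ^ w.+1 by rewrite expnS; lia.
have bit_u j : j < w.+2 -> bit u j = if j is j'.+1 then (if j' < w then bit v j' else a) else c.
  case: j => [|j] lt_j; first by rewrite bit_mulD_low ?bit_double_add.
  case: ltnP => [lt_jw|le_wj]; first by rewrite bit_mulD_low ?bit_double_add.
  rewrite (_ : j = w); last by lia.
  by rewrite bit_mulD_high // subnn /bit divn1 odd_leq1.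
have mirror j : j < w -> w.+2 - 1 - j.+1 = (w - 1 - j).+1 by lia.
rewrite /antipal_word; split=> [[_ sym_u]|[ac [_ sym_v]]].
  split; first by have := sym_u 0 isT; rewrite subn0 subSS subn0 !bit_u // ltnn addnC.
  split=> // j lt_jw; have := sym_u j.+1 (ltnW lt_jw).
  have lt_mirror : w - 1 - j < w by lia.
  by rewrite mirror // !bit_u ?lt_jw ?lt_mirror //; lia.
split; first by rewrite /u /wrap_bits [2 ^ w.+2]expnS; nia.
case=> [|j] lt_j; first by rewrite subn0 subSS subn0 !bit_u // ltnn addnC.
case: (ltnP j w) => [lt_jw|le_wj].
  have lt_mirror : w - 1 - j < w by lia.
  by rewrite mirror // !bit_u ?lt_jw ?lt_mirror ?sym_v //; lia.
rewrite (_ : j = w); last by lia.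
by rewrite (_ : w.+2 - 1 - w.+1 = 0) ?bit_u ?ltnn; lia.
Qed.

Lemma wrap_bitsP w u : u < 2 ^ w.+2 ->
  exists a c v, [/\ a <= 1, c <= 1, v < 2 ^ w & u = wrap_bits w a v c].
Proof.
move=> u_lt; set r := u %% 2 ^ w.+1.
exists (u %/ 2 ^ w.+1), (r %% 2), (r %/ 2); split.
- by rewrite -ltnS ltn_divLR ?expn_gt0 // -expnS.
- by rewrite -ltnS ltn_mod.
- by rewrite ltn_divLR // -expnSr ltn_mod expn_gt0.
- by rewrite /wrap_bits -!divn_eq.
Qed.

Lemma wrap_bits_inj w a c : injective (fun v => wrap_bits w a v c).
Proof. by move=> x y /addnI /addIn /eqP; rewrite eqn_mul2r => /eqP. Qed.

Lemma odd_wrap_bits w a v c : odd (wrap_bits w a v c) = odd c.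
Proof. by rewrite /wrap_bits !oddD !oddM oddX /= !andbF. Qed.

Fixpoint antipal_words m : seq nat :=
  if m is m'.+1 then
    [seq wrap_bits (2 * m') 0 v 1 | v <- antipal_words m'] ++
    [seq wrap_bits (2 * m') 1 v 0 | v <- antipal_words m']
  else [:: 0].

Lemma mem_antipal_words m u : u \in antipal_words m <-> antipal_word (2 * m) u.
Proof.
elim: m u => [|m IHm] u.
  by rewrite inE muln0 /antipal_word expn0 ltnS leqn0; split=> [/eqP->|[/eqP->]].
rewrite mulnS add2n mem_cat; split.
  by case/orP=> /mapP[v /IHm[v_lt sym_v] ->]; apply/antipal_word_wrap.
move=> word_u; have [a [c [v [a_le1 c_le1 v_lt def_u]]]] := wrap_bitsP word_u.1.
move: word_u; rewrite def_u => /antipal_word_wrap - /(_ a_le1 c_le1 v_lt) [ac /IHm word_v].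
apply/orP; have [[-> ->]|[-> ->]] : a = 0 /\ c = 1 \/ a = 1 /\ c = 0 by lia.
  by left; apply/mapP; exists v.
by right; apply/mapP; exists v.
Qed.

Lemma size_antipal_words m : size (antipal_words m) = 2 ^ m.
Proof. by elim: m => //= m IHm; rewrite size_cat !size_map IHm expnS mul2n addnn. Qed.

Lemma uniq_antipal_words m : uniq (antipal_words m).
Proof.
elim: m => //= m IHm; rewrite cat_uniq !map_inj_uniq ?IHm //=; try exact: wrap_bits_inj.
rewrite andbT; apply/hasPn => _ /mapP[v _ ->]; apply/negP => /mapP[v' _ /(congr1 odd)].
by rewrite !odd_wrap_bits.
Qed.

Definition antipal_numbers m := [seq wrap_bits (2 * m) 1 v 0 | v <- antipal_words m].

Lemma antipalindromic_binlenE n w : 2 ^ w.-1 <= n -> ~~ odd w ->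
  antipalindromic n /\ binlen n = w <-> antipal_word w n.
Proof.
move=> lo even_w; split=> [[/antipalindromicP[n_gt0 _ sym] <-]|[n_lt sym]].
  by split=> //; case/andP: (binlen_bounds n_gt0).
have len_n : binlen n = w by apply: binlen_eq; rewrite lo.
split=> //; apply/antipalindromicP; rewrite len_n; split=> //.
exact: leq_trans (expn_gt0 2 _) lo.
Qed.

Lemma mem_antipal_numbers m n :
  n \in antipal_numbers m <-> antipalindromic n /\ binlen n = 2 * m.+1.
Proof.
have even_w : ~~ odd (2 * m.+1) by rewrite oddM.
have lenE : 2 * m.+1 = (2 * m).+2 by rewrite mulnS add2n.
split=> [/mapP[v /mem_antipal_words[v_lt sym_v] ->]|[anti len_n]].
  apply/antipalindromic_binlenE => //; rewrite lenE.
    by rewrite /wrap_bits mul1n leq_addr.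
  exact/antipal_word_wrap.
have n_gt0 : 0 < n by case/antipalindromicP: anti.
have /andP[lo hi] := binlen_bounds n_gt0; rewrite len_n in lo hi.
have word_n : antipal_word (2 * m.+1) n by apply/antipalindromic_binlenE.
rewrite lenE /= in lo hi word_n.
have [a [c [v [a_le1 c_le1 v_lt def_n]]]] := wrap_bitsP hi.
move: word_n lo; rewrite def_n => /antipal_word_wrap - /(_ a_le1 c_le1 v_lt) [ac /mem_antipal_words word_v] lo.
have vc_lt : v * 2 + c < 2 ^ (2 * m).+1 by rewrite expnS; lia.
have [a0|a1] : a = 0 \/ a = 1 by lia.
  by move: lo; rewrite /wrap_bits a0 mul0n add0n leqNgt vc_lt.
have c0 : c = 0 by lia.
by apply/mapP; exists v; rewrite // a1 c0.
Qed.

Lemma size_antipal_numbers m : size (antipal_numbers m) = 2 ^ m.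
Proof. by rewrite size_map size_antipal_words. Qed.

Lemma uniq_antipal_numbers m : uniq (antipal_numbers m).
Proof. by rewrite map_inj_uniq ?uniq_antipal_words //; apply: wrap_bits_inj. Qed.

Theorem theorem21 (i : nat) (hi : 1 <= i) :
  exists s : seq (nat * nat),
    [/\ uniq s,
        (forall A B : nat,
           (A, B) \in s <->
           [/\ antipalindromic A, antipalindromic B & A = (4 ^ i + 1) * B])
      & size s = 2 ^ (i - 1)].
Proof.
case: i hi => [//|m] _.
have even_len : ~~ odd (2 * m.+1) by rewrite oddM.
have repeatE B : (4 ^ m.+1 + 1) * B = B * 2 ^ (2 * m.+1) + B.
  by rewrite mulnDl mul1n mulnC expnM.
exists [seq (B * 2 ^ (2 * m.+1) + B, B) | B <- antipal_numbers m]; split.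
- by rewrite map_inj_uniq ?uniq_antipal_numbers // => x y [].
- move=> A B; rewrite repeatE.
  split=> [/mapP[B' /mem_antipal_numbers[antiB lenB] [-> ->]]|[antiA antiB eqA]]; last subst A.
    by split=> //; apply/antipalindromic_repeatE.
  apply/mapP; exists B => //; apply/mem_antipal_numbers; split=> //.
  exact: (antipalindromic_repeatE antiB even_len).1 antiA.
- by rewrite size_map size_antipal_numbers subn1.
Qed.
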